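(* Let $M\in\mathbb{R}^{n\times n}$ be symmetric positive definite, let $N\ge1$, let timestep sizes $\delta_0,\delta_1,\dots,\delta_N>0$, let $\theta_0,\theta_{-1}\in\mathbb{R}^n$ be fixed, and let controls $u_1,\dots,u_N$ be fixed, where frame $i$ uses control $u_{\iota(i)}$. Let $\bar P(\cdot,u):\mathbb{R}^n\to\mathbb{R}$ be twice differentiable with locally Lipschitz second derivatives and $L$-curvature bounded (for some $L>0$) for every control value $u$. For $i=1,\dots,N$ and $\theta=(\theta_1,\dots,\theta_N)$ let $$\bar E_i=\frac{1}{2\delta_i^2}\Big\|\theta_i-\big(1+\tfrac{\delta_i}{\delta_{i-1}}\big)\theta_{i-1}+\tfrac{\delta_i}{\delta_{i-1}}\theta_{i-2}\Big\|_M^2+\bar P(\theta_i,u_{\iota(i)}),$$ $\Lambda_i=\frac12\|\partial\bar E_i/\partial\theta_i\|^2$, $\Lambda(\theta)=\sum_{i=1}^N\Lambda_i$, let $G(\theta)\in\mathbb{R}^{nN}$ be the stacked vector $(\partial\bar E_1/\partial\theta_1,\dots,\partial\bar E_N/\partial\theta_N)$, and let $J(\theta)=\partial G/\partial\theta\in\mathbb{R}^{nN\times nN}$ be its Jacobian (the block matrix whose $(i,k)$ block is $\partial^2\bar E_i/\partial\theta_i\partial\theta_k$). Suppose $\delta_i<\sqrt{\sigma_{\min}(M)/L}$ for all $i=1,\dots,N$. Then: (i) for each $i$ and fixed $\theta_{i-1},\theta_{i-2}$, the function $\theta_i\mapsto\Lambda_i$ satisfies the Polyak–Łojasiewicz condition,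 i.e. there is $\mu>0$ with $\frac12\|\nabla_{\theta_i}\Lambda_i\|^2\ge\mu(\Lambda_i-\inf\Lambda_i)$ for all $\theta_i$; (ii) $\sigma_{\min}(J(\theta))$ is bounded away from zero: there is $c>0$ (not depending on $\theta$ or the controls) with $\sigma_{\min}(J(\theta))\ge c$ for all $\theta$; (iii) $\theta\mapsto\Lambda(\theta)$ satisfies the Polyak–Łojasiewicz condition on $\mathbb{R}^{nN}$.
   Context: $\|x\|_M^2=x^TMx$; $\sigma_{\min}$ denotes the smallest singular value. A function $\phi:\mathbb{R}^n\to\mathbb{R}$ is $L$-weakly convex if $\phi(x)+\frac{L}{2}\|x\|^2$ is convex; $L$-gradient continuous if $\|\nabla\phi(x)-\nabla\phi(x')\|\le L\|x-x'\|$ for all $x,x'$; $L$-curvature bounded if both hold. The map $\iota$ assigns to each frame index the index of the control used there. *)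

From HB Require Import structures.
From mathcomp Require Import all_boot all_order all_algebra.
From mathcomp Require Import all_classical all_reals all_analysis.
Set Implicit Arguments. Unset Strict Implicit. Unset Printing Implicit Defensive.
Import Order.TTheory GRing.Theory Num.Theory.
Import numFieldNormedType.Exports.
Local Open Scope classical_set_scope.
Local Open Scope ring_scope.

Section Defs.
Variable R : realType.

Definition sqn m (v : 'rV[R]_m) : R := \sum_(j < m) v 0 j ^+ 2.
Definition enorm m (v : 'rV[R]_m) : R := Num.sqrt (sqn v).

Definition qM n (M : 'M[R]_n) (x : 'rV[R]_n) : R := (x *m M *m x^T) 0 0.

Definition sym_posdef n (M : 'M[R]_n) : Prop :=
  M^T = M /\ forall x : 'rV[R]_n, x != 0 -> 0 < qM M x.

Definition grad m (f : 'rV[R]_m -> R) (x : 'rV[R]_m) : 'rV[R]_m :=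
  \row_(j < m) derive f x (delta_mx 0 j).

Definition jac m p (F : 'rV[R]_m -> 'rV[R]_p) (x : 'rV[R]_m) : 'M[R]_(p, m) :=
  \matrix_(a < p, b < m) derive (fun y => F y 0 a) x (delta_mx 0 b).

Definition hess m (f : 'rV[R]_m -> R) (x : 'rV[R]_m) : 'M[R]_m := jac (grad f) x.

Definition sigma_min k (A : 'M[R]_k) : R :=
  Num.sqrt (inf [set l : R | eigenvalue (A^T *m A) l]).

Definition convex_fun m (f : 'rV[R]_m -> R) : Prop :=
  forall x y (t : R), 0 <= t <= 1 ->
    f (t *: x + (1 - t) *: y) <= t * f x + (1 - t) * f y.

Definition weakly_convex m (L : R) (f : 'rV[R]_m -> R) : Prop :=
  convex_fun (fun x => f x + L / 2 * sqn x).

Definition gradient_continuous m (L : R) (f : 'rV[R]_m -> R) : Prop :=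
  forall x x', enorm (grad f x - grad f x') <= L * enorm (x - x').

Definition curvature_bounded m (L : R) (f : 'rV[R]_m -> R) : Prop :=
  weakly_convex L f /\ gradient_continuous L f.

Definition twice_diff_loclip_hess m (f : 'rV[R]_m -> R) : Prop :=
  (forall x, differentiable f x) /\
  (forall x, differentiable (grad f) x) /\
  (forall x, exists2 r : R, 0 < r & exists K : R, forall y z,
      enorm (y - x) < r -> enorm (z - x) < r ->
      enorm (mxvec (hess f y - hess f z)) <= K * enorm (y - z)).

Definition PL m (f : 'rV[R]_m -> R) : Prop :=
  exists2 mu : R, 0 < mu & forall x,
    1 / 2 * sqn (grad f x) >= mu * (f x - inf (range f)).

(* ---- the objects of the statement ----
   Frames are indexed by k : 'I_N, frame k being the paper's frame i = k+1.
   The trajectory theta = (theta_1,...,theta_N) is stored as Th : 'M_(N,n),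
   row k being theta_{k+1}; the stacked vector in R^{nN} is mxvec Th. *)

Definition setrow N n (Th : 'M[R]_(N, n)) (k : 'I_N) (t : 'rV[R]_n) : 'M[R]_(N, n) :=
  \matrix_(a < N, j < n) (if a == k then t 0 j else Th a j).

(* thext th0 thm1 Th m = theta_{m-1}:  m = 0 -> theta_{-1}, m = 1 -> theta_0,
   m = k+2 -> theta_{k+1} = row k Th *)
Definition thext N n (th0 thm1 : 'rV[R]_n) (Th : 'M[R]_(N, n)) (m : nat) : 'rV[R]_n :=
  match m with
  | 0 => thm1
  | 1 => th0
  | m'.+2 => oapp (fun k : 'I_N => row k Th) 0 (insub m')
  end.

Variables (U : Type) (n N : nat) (M : 'M[R]_n) (del : nat -> R)
  (th0 thm1 : 'rV[R]_n) (P : 'rV[R]_n -> U -> R) (u : 'I_N -> U)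
  (iota : 'I_N -> 'I_N).

(* E-bar_i for paper index i = k+1; del m = delta_m *)
Definition Ebar (k : 'I_N) (Th : 'M[R]_(N, n)) : R :=
  let di := del k.+1 in let dim1 := del k in
  1 / (2 * di ^+ 2) *
    qM M (row k Th - (1 + di / dim1) *: thext th0 thm1 Th k.+1
          + (di / dim1) *: thext th0 thm1 Th k)
  + P (row k Th) (u (iota k)).

Definition dEbar (k : 'I_N) (Th : 'M[R]_(N, n)) : 'rV[R]_n :=
  grad (fun t => Ebar k (setrow Th k t)) (row k Th).

Definition Lambda_i (k : 'I_N) (Th : 'M[R]_(N, n)) : R := 1 / 2 * sqn (dEbar k Th).

Definition Lambda (v : 'rV[R]_(N * n)) : R := \sum_(k < N) Lambda_i k (vec_mx v).

Definition Gvec (v : 'rV[R]_(N * n)) : 'rV[R]_(N * n) :=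
  mxvec (\matrix_(k < N) dEbar k (vec_mx v)).

Definition Jmat (v : 'rV[R]_(N * n)) : 'M[R]_(N * n) := jac Gvec v.

End Defs.

From Pilot Require Import Defs.
From HB Require Import structures.
From mathcomp Require Import all_boot all_order all_algebra.
From mathcomp Require Import all_classical all_reals all_analysis.
From mathcomp Require Import ring lra.
Import Order.TTheory GRing.Theory Num.Theory.
Import numFieldNormedType.Exports.
Local Open Scope classical_set_scope.
Local Open Scope ring_scope.

Set Implicit Arguments. Unset Strict Implicit. Unset Printing Implicit Defensive.

(* The stacked gradient G is block lower triangular in theta: its block i depends only on
   theta_i, theta_(i-1), theta_(i-2), and its diagonal block delta_i^-2 M + Hess P(theta_i)
   is coercive with constant lambda_min(M) delta_i^-2 - L > 0, because grad P is
   L-Lipschitz and the step size is small.  Forward substitution through the triangular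
   Jacobian then bounds |e| by |e J^T| uniformly in theta and in the controls, which is (ii).
   Lambda_i and Lambda both have the form 1/2 |F|^2, whose gradient is F DF^T; a uniform
   bound c |y|^2 <= |y DF^T|^2 together with inf >= 0 gives the PL inequality with constant
   c.  This yields (i) from the diagonal block alone and (iii) from the bound of (ii). *)


Section RowVectors.
Variable R : realType.
Implicit Types (a c : R).

Definition dot m (x y : 'rV[R]_m) : R := (x *m y^T) 0 0.

Lemma dotE m (x y : 'rV[R]_m) : dot x y = \sum_(j < m) x 0 j * y 0 j.
Proof. by rewrite /dot mxE; apply: eq_bigr => j _; rewrite mxE. Qed.

Lemma sqn_dot m (x : 'rV[R]_m) : sqn x = dot x x.
Proof. by rewrite dotE /sqn; apply: eq_bigr => j _; rewrite expr2. Qed.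

Lemma dotC m (x y : 'rV[R]_m) : dot x y = dot y x.
Proof. by rewrite !dotE; apply: eq_bigr => j _; rewrite mulrC. Qed.

Lemma dotDl m (x y z : 'rV[R]_m) : dot (x + y) z = dot x z + dot y z.
Proof. by rewrite /dot mulmxDl mxE. Qed.

Lemma dotZl m a (x z : 'rV[R]_m) : dot (a *: x) z = a * dot x z.
Proof. by rewrite /dot -scalemxAl mxE. Qed.

Lemma dotNl m (x z : 'rV[R]_m) : dot (- x) z = - dot x z.
Proof. by rewrite /dot mulNmx mxE. Qed.

Lemma dotDr m (x y z : 'rV[R]_m) : dot z (x + y) = dot z x + dot z y.
Proof. by rewrite dotC dotDl !(dotC z). Qed.

Lemma dotZr m a (x z : 'rV[R]_m) : dot z (a *: x) = a * dot z x.
Proof. by rewrite dotC dotZl dotC. Qed.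

Lemma dotNr m (x z : 'rV[R]_m) : dot z (- x) = - dot z x.
Proof. by rewrite dotC dotNl dotC. Qed.

Lemma dot0l m (x : 'rV[R]_m) : dot 0 x = 0.
Proof. by rewrite /dot mul0mx mxE. Qed.

Lemma dot_delta m (x : 'rV[R]_m) j : dot x (delta_mx 0 j) = x 0 j.
Proof. by rewrite /dot trmx_delta -colE mxE. Qed.

Lemma dot_mulmxl m p (x : 'rV[R]_m) (A : 'M[R]_(m, p)) (y : 'rV[R]_p) :
  dot (x *m A) y = dot x (y *m A^T).
Proof. by rewrite /dot trmx_mul trmxK mulmxA. Qed.

Lemma sqn_ge0 m (x : 'rV[R]_m) : 0 <= sqn x.
Proof. by apply: sumr_ge0 => j _; rewrite sqr_ge0. Qed.

Lemma sqn0 m : sqn (0 : 'rV[R]_m) = 0.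
Proof. by rewrite /sqn big1 // => j _; rewrite mxE expr0n. Qed.

Lemma sqr_coord_le_sqn m (x : 'rV[R]_m) j : x 0 j ^+ 2 <= sqn x.
Proof.
by rewrite /sqn (bigD1 j) //= lerDl; apply: sumr_ge0 => i _; rewrite sqr_ge0.
Qed.

Lemma sqn_gt0 m (x : 'rV[R]_m) : x != 0 -> 0 < sqn x.
Proof.
move=> x_neq0; rewrite lt_def sqn_ge0 andbT; apply: contra x_neq0 => /eqP sx0.
apply/eqP/rowP => j; apply/eqP; rewrite mxE -sqrf_eq0 eq_le sqr_ge0 andbT.
by rewrite -sx0 sqr_coord_le_sqn.
Qed.

Lemma sqnZ m a (x : 'rV[R]_m) : sqn (a *: x) = a ^+ 2 * sqn x.
Proof. by rewrite !sqn_dot dotZl dotZr mulrA expr2. Qed.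

Lemma sqnN m (x : 'rV[R]_m) : sqn (- x) = sqn x.
Proof. by rewrite !sqn_dot dotNl dotNr opprK. Qed.

Lemma sqnD m (x y : 'rV[R]_m) : sqn (x + y) = sqn x + 2 * dot x y + sqn y.
Proof. by rewrite !sqn_dot dotDl !dotDr (dotC y x); ring. Qed.

Lemma sqn_mxvec p q (A : 'M[R]_(p, q)) : sqn (mxvec A) = \sum_(k < p) sqn (row k A).
Proof.
rewrite /sqn (reindex _ (curry_mxvec_bij _ _)) /= pair_bigA /=.
by apply: eq_bigr => -[i j] _ /=; rewrite mxvecE mxE.
Qed.

Lemma dot_le_young m (x y : 'rV[R]_m) a : 0 < a ->
  2 * dot x y <= a * sqn x + sqn y / a.
Proof.
move=> a_gt0; have := sqn_ge0 (a *: x - y).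
rewrite sqnD sqnZ sqnN dotNr dotZl expr2 => sq_ge0.
rewrite -(ler_pM2l a_gt0) mulrDr (mulrCA a (sqn y)) mulfV ?gt_eqF // mulr1; nra.
Qed.

Lemma sqnD_le m (x y : 'rV[R]_m) : sqn (x + y) <= 2 * sqn x + 2 * sqn y.
Proof.
by rewrite sqnD; have := dot_le_young x y (@ltr01 R); rewrite mul1r divr1; lra.
Qed.

Lemma sqn_ge_of_dot m (w z : 'rV[R]_m) c : 0 < c ->
  c * sqn z <= dot w z -> c ^+ 2 * sqn z <= sqn w.
Proof.
move=> c_gt0 dot_ge; have := dot_le_young z w c_gt0; rewrite dotC => young.
have : c * (c * sqn z) <= c * (sqn w / c) by rewrite ler_pM2l //; lra.
by rewrite mulrA -expr2 mulrCA mulfV ?gt_eqF // mulr1.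
Qed.

End RowVectors.

Section QuadraticForms.
Variable R : realType.

Definition norm1_mx m (A : 'M[R]_m) : R := \sum_i \sum_j `|A i j|.

Lemma norm1_mx_ge0 m (A : 'M[R]_m) : 0 <= norm1_mx A.
Proof. by apply: sumr_ge0 => i _; apply: sumr_ge0. Qed.

Lemma quad_form_norm_le m (A : 'M[R]_m) x : `|dot (x *m A) x| <= norm1_mx A * sqn x.
Proof.
have -> : dot (x *m A) x = \sum_i \sum_j x 0 i * A i j * x 0 j.
  by rewrite dotE exchange_big; apply: eq_bigr => j _; rewrite mxE mulr_suml.
rewrite /norm1_mx !mulr_suml; apply: (le_trans (ler_norm_sum _ _ _)).
apply: ler_sum => i _; rewrite mulr_suml; apply: (le_trans (ler_norm_sum _ _ _)).
apply: ler_sum => j _; rewrite (mulrC (x 0 i)) -mulrA !normrM ler_wpM2l //.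
have : 2 * (`|x 0 i| * `|x 0 j|) <= `|x 0 i| ^+ 2 + `|x 0 j| ^+ 2.
  by have := sqr_ge0 (`|x 0 i| - `|x 0 j|); rewrite sqrrB; lra.
rewrite !real_normK ?num_real //.
have := sqr_coord_le_sqn x i; have := sqr_coord_le_sqn x j; lra.
Qed.

Lemma sqn_mulmx_le m p (A : 'M[R]_(m, p)) x :
  sqn (x *m A) <= norm1_mx (A *m A^T) * sqn x.
Proof.
rewrite sqn_dot dot_mulmxl dotC -mulmxA.
by have := quad_form_norm_le (A *m A^T) x; rewrite ler_norml => /andP[].
Qed.

Lemma mul_rV_lin1_of m p (f : 'rV[R]_m -> 'rV[R]_p) : linear f ->
  forall u, u *m lin1_mx f = f u.
Proof.
move=> fL; exact: (mul_rV_lin1 (HB.pack f (GRing.isLinear.Build _ _ _ _ f fL))).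
Qed.

End QuadraticForms.

Section SymmetricMatrices.
Variable R : realType.

Lemma discriminant_le (a b c : R) : 0 <= c ->
  (forall t, 0 <= a + 2 * t * b + t ^+ 2 * c) -> b ^+ 2 <= a * c.
Proof.
move=> c_ge0 quad_ge0; have [c_gt0|c_le0] := ltrP 0 c.
  have := quad_ge0 (- b / c).
  have -> : a + 2 * (- b / c) * b + (- b / c) ^+ 2 * c = a - b ^+ 2 / c.
    by field; rewrite gt_eqF.
  by rewrite subr_ge0 ler_pdivrMr // mulrC.
have c_eq0 : c = 0 by apply/le_anti; rewrite c_le0 c_ge0.
move: quad_ge0; rewrite c_eq0 => quad_ge0.
have [->|b_neq0] := eqVneq b 0; first by rewrite expr0n mulr0.
have := quad_ge0 (- (a + 1) / (2 * b)).
have -> : a + 2 * (- (a + 1) / (2 * b)) * b + (- (a + 1) / (2 * b)) ^+ 2 * 0 = -1.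
  by field.
by rewrite ler0N1.
Qed.

Lemma psd_cauchy_schwarz m (B : 'M[R]_m) : B^T = B ->
  (forall x, 0 <= dot (x *m B) x) ->
  forall x y, dot (x *m B) y ^+ 2 <= dot (x *m B) x * dot (y *m B) y.
Proof.
move=> BT psdB x y; apply: discriminant_le => // t.
have := psdB (x + t *: y).
rewrite mulmxDl -scalemxAl dotDl !dotDr dotZl !dotZr.
have -> : dot (y *m B) x = dot (x *m B) y by rewrite dot_mulmxl BT dotC.
rewrite dotZl mulrA -expr2 => psd_xty; lra.
Qed.

Lemma psd_unit_coercive m (B : 'M[R]_m) : B^T = B ->
  (forall x, 0 <= dot (x *m B) x) -> B \in unitmx ->
  exists2 K, 0 < K & forall x, sqn x <= K * dot (x *m B) x.
Proof.
(* Invertibility gives |x|^2 <= K1 |xB|^2, and Cauchy-Schwarz for the form of B gives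
   |xB|^4 <= (xBx) (xB B (xB)^T) <= (xBx) K2 |xB|^2. *)
move=> BT psdB B_unit.
pose K1 := norm1_mx (invmx B *m (invmx B)^T) + 1; pose K2 := norm1_mx B + 1.
have K1_gt0 : 0 < K1 by have := norm1_mx_ge0 (invmx B *m (invmx B)^T); rewrite /K1; lra.
have K2_gt0 : 0 < K2 by have := norm1_mx_ge0 B; rewrite /K2; lra.
exists (K1 * K2) => [|x]; first exact: mulr_gt0.
set s := sqn (x *m B); set q := dot (x *m B) x.
have s_ge0 : 0 <= s := sqn_ge0 _.
have x_le : sqn x <= K1 * s.
  rewrite -[x in sqn x](mulmxK B_unit); apply: le_trans (sqn_mulmx_le _ _) _.
  by apply: ler_wpM2r => //; rewrite lerDl.
have s_le : s <= K2 * q.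
  have cs := psd_cauchy_schwarz BT psdB x (x *m B); rewrite -sqn_dot -/s -/q in cs.
  have : dot (x *m B *m B) (x *m B) <= K2 * s.
    have := quad_form_norm_le B (x *m B); rewrite ler_norml => /andP[_].
    by move/le_trans; apply; apply: ler_wpM2r => //; rewrite lerDl.
  move/(ler_wpM2l (psdB x))/(le_trans cs) => s2_le.
  have [s_eq0|s_neq0] := eqVneq s 0; first by rewrite s_eq0 mulr_ge0 ?(ltW K2_gt0) ?psdB.
  have s_gt0 : 0 < s by rewrite lt_def s_neq0.
  by rewrite -(ler_pM2r s_gt0) -expr2 mulrAC mulrC.
by apply: le_trans x_le _; rewrite -mulrA ler_pM2l.
Qed.

Lemma sym_eigenvalue_min m (A : 'M[R]_m) : (0 < m)%N -> A^T = A ->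
  exists r, eigenvalue A r /\ forall x, r * sqn x <= dot (x *m A) x.
Proof.
move=> m_gt0 AT.
pose S := [set dot (x *m A) x / sqn x | x in [set x : 'rV_m | x != 0]].
have S_neq0 : S !=set0.
  pose e : 'rV[R]_m := delta_mx 0 (Ordinal m_gt0).
  have e_neq0 : e != 0.
    apply/eqP => /matrixP/(_ 0 (Ordinal m_gt0)); rewrite !mxE eqxx /= => /eqP.
    by rewrite oner_eq0.
  by exists (dot (e *m A) e / sqn e), e.
have S_lb : lbound S (- norm1_mx A).
  move=> _ [x x_neq0 <-]; rewrite ler_pdivlMr ?sqn_gt0 // mulNr.
  by have := quad_form_norm_le A x; rewrite ler_norml => /andP[].
pose r := inf S.
have r_le x : r * sqn x <= dot (x *m A) x.
  have [->|x_neq0] := eqVneq x 0; first by rewrite sqn0 mul0mx dot0l mulr0.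
  rewrite -ler_pdivlMr ?sqn_gt0 //.
  by apply: ge_inf; [exists (- norm1_mx A) | exists x].
exists r; split => //.
pose B := A - r%:M.
have qB x : dot (x *m B) x = dot (x *m A) x - r * sqn x.
  by rewrite /B mulmxBr mul_mx_scalar dotDl dotNl dotZl sqn_dot.
have BT : B^T = B by rewrite /B linearB /= AT tr_scalar_mx.
have psdB x : 0 <= dot (x *m B) x by rewrite qB subr_ge0.
(* Otherwise B would be coercive and r + 1/K a larger lower bound of the quotients. *)
have B_nunit : B \notin unitmx.
  apply/negP => /(psd_unit_coercive BT psdB) [K K_gt0 K_le].
  suff : r + K^-1 <= r by rewrite gerDl leNgt invr_gt0 K_gt0.
  apply: lb_le_inf => // _ [x x_neq0 <-].
  rewrite ler_pdivlMr ?sqn_gt0 // mulrDl.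
  have := K_le x; rewrite qB -ler_pdivrMl // mulrC; lra.
have /rowV0Pn[v /sub_kermxP vB v_neq0] : kermx B != 0.
  by rewrite kermx_eq0 row_free_unit.
apply/eigenvalueP; exists v => //.
by apply/eqP; move/eqP: vB; rewrite /B mulmxBr mul_mx_scalar subr_eq0.
Qed.

Lemma sqn_mul_tr_ge m (A : 'M[R]_m) c : 0 < c ->
  (forall x, c * sqn x <= sqn (x *m A)) -> forall x, c * sqn x <= sqn (x *m A^T).
Proof.
move=> c_gt0 A_ge.
have A_unit : A \in unitmx.
  rewrite -row_free_unit; apply: inj_row_free => v vA0; apply/eqP/contraT => v_neq0.
  by have := A_ge v; rewrite vA0 sqn0 leNgt pmulr_rgt0 ?sqn_gt0.
move=> x; set y := x *m A^T; set z := x *m invmx A.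
have xE : sqn x = dot y z.
  by rewrite sqn_dot /y dot_mulmxl trmxK /z mulmxKV.
have zA : z *m A = x by rewrite mulmxKV.
have := A_ge z; rewrite zA => z_le.
have ci_gt0 : 0 < c^-1 by rewrite invr_gt0.
have := dot_le_young y z ci_gt0; rewrite -xE invrK => young.
rewrite -(ler_pM2l ci_gt0) mulrA mulVf ?gt_eqF // mul1r; lra.
Qed.

Lemma eigenvalue_trmx_mul_ge m (A : 'M[R]_m) c l :
  (forall x, c * sqn x <= sqn (x *m A^T)) -> eigenvalue (A^T *m A) l -> c <= l.
Proof.
move=> A_ge /eigenvalueP [w wE w_neq0].
have lE : l * sqn w = sqn (w *m A^T).
  by rewrite sqn_dot -dotZl -wE mulmxA dot_mulmxl -sqn_dot.
by rewrite -(ler_pM2r (sqn_gt0 w_neq0)) lE.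
Qed.

Lemma sigma_min_ge m (A : 'M[R]_m) c : (0 < m)%N ->
  (forall x, c * sqn x <= sqn (x *m A^T)) -> Num.sqrt c <= sigma_min A.
Proof.
move=> m_gt0 A_ge; apply: ler_wsqrtr.
have ATA_sym : (A^T *m A)^T = A^T *m A by rewrite trmx_mul trmxK.
have [r [r_eig _]] := sym_eigenvalue_min m_gt0 ATA_sym.
apply: lb_le_inf; first by exists r.
by move=> l; apply: eigenvalue_trmx_mul_ge.
Qed.

Lemma posdef_rayleigh_ge n (M : 'M[R]_n) : (0 < n)%N -> sym_posdef M ->
  exists2 lam, sigma_min M <= lam & forall x, lam * sqn x <= dot (x *m M) x.
Proof.
move=> n_gt0 [MT M_pd].
have [r [/eigenvalueP [v vM v_neq0] r_le]] := sym_eigenvalue_min n_gt0 MT.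
have r_gt0 : 0 < r.
  have := M_pd v v_neq0; rewrite /qM -/(dot _ _) vM dotZl -sqn_dot.
  by rewrite pmulr_lgt0 // sqn_gt0.
exists r => //; rewrite /sigma_min -[r in _ <= r]gtr0_norm // -sqrtr_sqr.
apply/ler_wsqrtr/ge_inf.
  exists 0 => l; apply: eigenvalue_trmx_mul_ge => x.
  by rewrite mul0r sqn_ge0.
apply/eigenvalueP; exists v => //.
by rewrite MT mulmxA vM -scalemxAl vM scalerA expr2.
Qed.

End SymmetricMatrices.

Section Derivatives.
Variable R : realType.

Lemma derive_quot_affine (V : normedModType R) (f : V -> R) x v (a b : R) :
  (forall h : R, h != 0 -> h^-1 *: (f (h *: v + x) - f x) = a + h * b) ->
  derivable f x v /\ 'D_v f x = a.
Proof.
move=> fE.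
have lin_cvg : (fun h : R => a + h * b) @ 0^' --> a.
  have : {for 0, continuous (fun h : R => a + h * b)}.
    by apply: cvgD; [exact: cvg_cst | apply: cvgMr_tmp; exact: cvg_id].
  by move/continuous_withinNx; rewrite mul0r addr0.
have quot_cvg : (fun h => h^-1 *: ((f \o shift x) (h *: v) - f x)) @ 0^' --> a.
  apply: cvg_trans lin_cvg; apply: near_eq_cvg; near=> h.
  by rewrite /= fE //; near: h; exact: nbhs_dnbhs_neq.
by split; [apply/cvg_ex; exists a | exact: cvg_lim quot_cvg].
Unshelve. all: by end_near. Qed.

Lemma derive_comp_affine (V V' W : normedModType R) (F : V -> W) (A : V' -> V) x e d :
  (forall h : R, A (h *: e + x) = h *: d + A x) ->
  (derivable (F \o A) x e <-> derivable F (A x) d) /\ 'D_e (F \o A) x = 'D_d F (A x).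
Proof.
move=> AE; rewrite /derivable /derive.
have -> : (fun h : R => h^-1 *: (((F \o A) \o shift x) (h *: e) - (F \o A) x)) =
    (fun h : R => h^-1 *: ((F \o shift (A x)) (h *: d) - F (A x))).
  by apply/funext => h /=; rewrite AE.
by split.
Qed.

Lemma derive_entry_jacobian m p (g : 'rV[R]_m -> 'rV[R]_p) y d j :
  differentiable g y ->
  derivable (fun z => g z 0 j) y d /\ 'D_d (fun z => g z 0 j) y = (d *m 'J g y) 0 j.
Proof.
move=> dg; have dgd : derivable g y d by exact: diff_derivable.
split; first exact: (derivable_mxP _ _ _).1 dgd 0 j.
by rewrite -deriveEjacobian // derive_mx // mxE.
Qed.

Lemma sqn_continuous m : continuous (@sqn R m).
Proof.
apply: continuous_big => [|j _]; first exact: add_continuous.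
by move=> v; have j_cont := @coord_continuous R 1 m 0 j v; exact: (cvgM j_cont j_cont).
Qed.

Lemma lipschitz_sqn m p (g : 'rV[R]_m -> 'rV[R]_p) L :
  (forall x x', enorm (g x - g x') <= L * enorm (x - x')) ->
  forall x x', sqn (g x - g x') <= L ^+ 2 * sqn (x - x').
Proof.
move=> g_lip x x'; have := g_lip x x'; rewrite /enorm => le_sqrt.
have := ler_pM (sqrtr_ge0 _) (sqrtr_ge0 _) le_sqrt le_sqrt.
by rewrite -!expr2 sqr_sqrtr ?sqn_ge0 // exprMn sqr_sqrtr ?sqn_ge0.
Qed.

Lemma sqn_mul_jacobian_le m p (g : 'rV[R]_m -> 'rV[R]_p) t L :
  differentiable g t -> (forall x x', sqn (g x - g x') <= L ^+ 2 * sqn (x - x')) ->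
  forall x, sqn (x *m 'J g t) <= L ^+ 2 * sqn x.
Proof.
move=> dg g_lip x; rewrite -deriveEjacobian //.
pose q h : 'rV[R]_p := h^-1 *: (g (h *: x + t) - g t).
have q_cvg : q @ 0^' --> 'D_x g t by exact: diff_derivable.
have sqn_cvg : @sqn R p \o q @ 0^' --> sqn ('D_x g t).
  exact: cvg_comp q_cvg (@sqn_continuous p _).
rewrite -(cvg_lim _ sqn_cvg) //; apply: limr_le; first exact: cvgP sqn_cvg.
near=> h; have h_neq0 : h != 0 by near: h; exact: nbhs_dnbhs_neq.
have := g_lip (h *: x + t) t; rewrite addrK /q /= !sqnZ => le_h.
have -> : L ^+ 2 * sqn x = h^-1 ^+ 2 * (L ^+ 2 * (h ^+ 2 * sqn x)) by field.
by apply: ler_wpM2l => //; rewrite sqr_ge0.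
Unshelve. all: by end_near. Qed.

Lemma derive_quad_form m (M : 'M[R]_m) (b x e : 'rV[R]_m) : M^T = M ->
  derivable (fun y => qM M (y - b)) x e /\
  'D_e (fun y => qM M (y - b)) x = 2 * dot ((x - b) *m M) e.
Proof.
move=> MT; apply: (derive_quot_affine (b := dot (e *m M) e)) => h h_neq0.
rewrite /qM -!/(dot _ _) -addrA; move: (x - b) => z.
rewrite mulmxDl dotDl !dotDr -scalemxAl !dotZl !dotZr.
have -> : dot (e *m M) z = dot (z *m M) e by rewrite dot_mulmxl MT dotC.
by rewrite /GRing.scale /=; field.
Qed.

Lemma jac_eq_trmx m p (F : 'rV[R]_m -> 'rV[R]_p) x (D : 'M[R]_(m, p)) :
  (forall a e, 'D_e (fun y => F y 0 a) x = (e *m D) 0 a) -> jac F x = D^T.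
Proof. by move=> FE; apply/matrixP => a b; rewrite !mxE FE -rowE mxE. Qed.

Lemma grad_half_sqn m p (F : 'rV[R]_m -> 'rV[R]_p) x (D : 'M[R]_(m, p)) :
  (forall a e, derivable (fun y => F y 0 a) x e) ->
  (forall a e, 'D_e (fun y => F y 0 a) x = (e *m D) 0 a) ->
  grad (fun y => 1/2 * sqn (F y)) x = F x *m D^T.
Proof.
move=> F_der FE; apply/rowP => b; rewrite !mxE.
have -> : (fun y => 1/2 * sqn (F y)) =
    (1/2 : R) \*: \sum_(a < p) ((fun y => F y 0 a) * (fun y => F y 0 a)).
  by apply/funext => y; rewrite /= fct_sumE.
rewrite deriveZ; last by apply: derivable_sum => a; exact: derivableM.
rewrite derive_sum; last by move=> a; exact: derivableM.
rewrite scaler_sumr; apply: eq_bigr => a _.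
by rewrite deriveM // FE -rowE !mxE /GRing.scale /=; lra.
Qed.

Lemma PL_half_sqn_of_derive m p (F : 'rV[R]_m -> 'rV[R]_p)
    (D : 'rV[R]_m -> 'M[R]_(m, p)) c : 0 < c ->
  (forall x a e, derivable (fun y => F y 0 a) x e) ->
  (forall x a e, 'D_e (fun y => F y 0 a) x = (e *m D x) 0 a) ->
  (forall x y, c * sqn y <= sqn (y *m (D x)^T)) ->
  PL (fun y => 1/2 * sqn (F y)).
Proof.
move=> c_gt0 F_der FE D_ge; exists c => // x.
rewrite (grad_half_sqn (F_der x) (FE x)).
have inf_ge0 : 0 <= inf (range (fun y => 1/2 * sqn (F y))).
  apply: lb_le_inf; first by exists (1/2 * sqn (F x)), x.
  by move=> _ [y _ <-]; rewrite mulr_ge0 ?sqn_ge0.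
have := D_ge x (F x); have := sqn_ge0 (F x); nra.
Qed.

End Derivatives.

Section Coercivity.
Variable R : realType.

Lemma quad_form_perturb_ge m (M J : 'M[R]_m) lam L c z : 0 < L -> 0 <= c ->
  (forall x, lam * sqn x <= dot (x *m M) x) ->
  (forall x, sqn (x *m J) <= L ^+ 2 * sqn x) ->
  (c * lam - L) * sqn z <= dot (z *m (c *: M + J)) z.
Proof.
move=> L_gt0 c_ge0 M_ge J_le.
rewrite mulmxDr dotDl -scalemxAr dotZl mulrBl -mulrA.
have := ler_wpM2l c_ge0 (M_ge z).
have Li_gt0 : 0 < L^-1 by rewrite invr_gt0.
have := dot_le_young (- (z *m J)) z Li_gt0; rewrite sqnN dotNl invrK.
have : L^-1 * sqn (z *m J) <= L * sqn z.
  have -> : L * sqn z = L^-1 * (L ^+ 2 * sqn z) by field; rewrite gt_eqF.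
  by apply: ler_wpM2l; [exact: ltW | exact: J_le].
lra.
Qed.

Lemma sqn_mul_ge_of_coercive m (A : 'M[R]_m) c : 0 < c ->
  (forall z, c * sqn z <= dot (z *m A) z) ->
  forall z, c ^+ 2 * sqn z <= sqn (z *m A) /\ c ^+ 2 * sqn z <= sqn (z *m A^T).
Proof.
move=> c_gt0 A_ge z; split; apply: sqn_ge_of_dot => //.
by rewrite dot_mulmxl trmxK dotC.
Qed.

Fixpoint forward_const (c b : nat -> R) k : R :=
  if k is k'.+1 then forward_const c b k' + (1 + b k' * forward_const c b k') / c k' else 0.

Lemma forward_const_ge0 (c b : nat -> R) k :
  (forall i, 0 <= c i) -> (forall i, 0 <= b i) -> 0 <= forward_const c b k.
Proof.
move=> c_ge0 b_ge0; elim: k => [|k IH] //=.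
by rewrite addr_ge0 ?divr_ge0 ?addr_ge0 ?mulr_ge0.
Qed.

Lemma sum_le_forward_const (c b x y : nat -> R) K :
  (forall k, (k < K)%N -> 0 < c k) -> (forall k, 0 <= b k) -> (forall k, 0 <= y k) ->
  (forall k, (k < K)%N -> c k * x k <= y k + b k * \sum_(i < k) x i) ->
  \sum_(i < K) x i <= forward_const c b K * \sum_(i < K) y i.
Proof.
move=> c_gt0 b_ge0 y_ge0 x_le; set Y := \sum_(i < K) y i.
suff : forall k, (k <= K)%N -> \sum_(i < k) x i <= forward_const c b k * Y by apply.
elim=> [|k IH] k_lt; first by rewrite big_ord0 mul0r.
have yk_le : y k <= Y.
  by rewrite /Y (bigD1 (Ordinal k_lt)) //= lerDl sumr_ge0.
have ck_gt0 := c_gt0 k k_lt.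
rewrite big_ord_recr /=; set S := \sum_(i < k) x i; set C := forward_const c b k.
have S_le : S <= C * Y := IH (ltnW k_lt).
have xk_le : x k <= (Y + b k * (C * Y)) / c k.
  rewrite ler_pdivlMr // mulrC; apply: le_trans (x_le k k_lt) _.
  by rewrite lerD // ler_wpM2l.
have -> : (C + (1 + b k * C) / c k) * Y = C * Y + (Y + b k * (C * Y)) / c k.
  by field; rewrite gt_eqF.
exact: lerD.
Qed.

End Coercivity.

Section Trajectory.
Variables (R : realType) (U : Type) (n N : nat) (M : 'M[R]_n) (del : nat -> R)
  (th0 thm1 : 'rV[R]_n) (P : 'rV[R]_n -> U -> R) (iota : 'I_N -> 'I_N).

Local Notation gradP a := (grad (fun x => P x a)).
Local Notation Ebar u := (Ebar M del th0 thm1 P u iota).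
Local Notation dEbar u := (dEbar M del th0 thm1 P u iota).
Local Notation Gvec u := (Gvec M del th0 thm1 P u iota).

Definition step_ratio k := del k.+1 / del k.
Definition delta_inv2 k := (del k.+1 ^+ 2)^-1.

(* Ebar penalises theta_i - extrap k, where thext _ _ Th k.+1 is theta_(i-1) and
   thext _ _ Th k is theta_(i-2) for the frame i = k + 1. *)
Definition extrap (a b : 'rV[R]_n) (Th : 'M[R]_(N, n)) k : 'rV[R]_n :=
  (1 + step_ratio k) *: thext a b Th k.+1 - step_ratio k *: thext a b Th k.

Lemma delta_inv2_ge0 k : 0 <= delta_inv2 k.
Proof. by rewrite invr_ge0 sqr_ge0. Qed.

Lemma row_setrow (Th : 'M[R]_(N, n)) k t : row k (setrow Th k t) = t.
Proof. by apply/rowP => j; rewrite !mxE eqxx. Qed.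

Lemma setrow_affine (Th : 'M[R]_(N, n)) k h e t :
  setrow Th k (h *: e + t) = h *: setrow 0 k e + setrow Th k t.
Proof. by apply/matrixP => a j; rewrite !mxE; case: eqP; rewrite ?mulr0 ?add0r. Qed.

Lemma thext_row a b (Th : 'M[R]_(N, n)) (k : 'I_N) : thext a b Th k.+2 = row k Th.
Proof. by rewrite /=; case: insubP => [i _ /val_inj -> //|]; rewrite ltn_ord. Qed.

Lemma thext_setrow a b (Th : 'M[R]_(N, n)) (k : 'I_N) t m :
  (m <= k.+1)%N -> thext a b (setrow Th k t) m = thext a b Th m.
Proof.
case: m => [|[|m]] //= m_le; case: insubP => [i _ iE|] //=.
apply/rowP => j; rewrite !mxE ifN //; apply/eqP => ik.
by move: m_le; rewrite -iE ik ltnn.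
Qed.

Lemma thext_affine a b (A B : 'M[R]_(N, n)) h m :
  thext a b (h *: A + B) m = h *: thext 0 0 A m + thext a b B m.
Proof.
case: m => [|[|m]] /=; rewrite ?scaler0 ?add0r //.
by case: insubP => [i _ _|] /=; [apply/rowP => j; rewrite !mxE | rewrite scaler0 addr0].
Qed.

Lemma extrap_affine a b (A B : 'M[R]_(N, n)) h k :
  extrap a b (h *: A + B) k = h *: extrap 0 0 A k + extrap a b B k.
Proof. by rewrite /extrap !thext_affine; apply/rowP => j; rewrite !mxE; ring. Qed.

Lemma extrap_setrow a b (Th : 'M[R]_(N, n)) (k : 'I_N) t :
  extrap a b (setrow Th k t) k = extrap a b Th k.
Proof. by rewrite /extrap !thext_setrow. Qed.

Lemma extrap0 k : extrap 0 0 0 k = 0.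
Proof.
have thext0 m : thext 0 0 (0 : 'M[R]_(N, n)) m = 0.
  by case: m => [|[|m]] //=; case: insubP => [i _ _|] //=; rewrite row0.
by rewrite /extrap !thext0 !scaler0 subr0.
Qed.

Lemma Ebar_setrow u k (Th : 'M[R]_(N, n)) t :
  Ebar u k (setrow Th k t) =
  1 / (2 * del k.+1 ^+ 2) * qM M (t - extrap th0 thm1 Th k) + P t (u (iota k)).
Proof.
rewrite /Defs.Ebar row_setrow -(extrap_setrow th0 thm1 Th k t) /extrap /step_ratio.
by congr (_ * qM M _ + _); rewrite opprB addrCA addrC.
Qed.

Hypothesis MT : M^T = M.
Hypothesis P_diff : forall a x, differentiable (fun y => P y a) x.
Hypothesis gradP_diff : forall a x, differentiable (gradP a) x.

Lemma dEbarE u k Th : dEbar u k Th =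
  delta_inv2 k *: ((row k Th - extrap th0 thm1 Th k) *m M) + gradP (u (iota k)) (row k Th).
Proof.
apply/rowP => j; rewrite /Defs.dEbar /grad mxE [RHS]mxE.
have -> : (fun t => Ebar u k (setrow Th k t)) =
    (1 / (2 * del k.+1 ^+ 2)) \*: (fun t => qM M (t - extrap th0 thm1 Th k)) +
    (fun t => P t (u (iota k))).
  by apply/funext => t; rewrite Ebar_setrow.
have [qM_der qM_D] := derive_quad_form (extrap th0 thm1 Th k) (row k Th) (delta_mx 0 j) MT.
rewrite deriveD; [|exact: derivableZ|exact: diff_derivable].
rewrite deriveZ // qM_D dot_delta !mxE; congr (_ + _).
rewrite /delta_inv2 /GRing.scale /= div1r invfM.
by move: (del k.+1 ^+ 2)^-1 => c; field.
Qed.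

Definition dG (u : 'I_N -> U) (Th X : 'M[R]_(N, n)) (k : 'I_N) : 'rV[R]_n :=
  delta_inv2 k *: ((row k X - extrap 0 0 X k) *m M) +
  row k X *m 'J (gradP (u (iota k))) (row k Th).

Lemma derive_dEbar u k Th X l :
  derivable (fun Y => dEbar u k Y 0 l) Th X /\
  'D_X (fun Y => dEbar u k Y 0 l) Th = dG u Th X k 0 l.
Proof.
set a := u (iota k).
pose f Y := delta_inv2 k * ((row k Y - extrap th0 thm1 Y k) *m M) 0 l.
have -> : (fun Y => dEbar u k Y 0 l) = f + ((fun z : 'rV[R]_n => gradP a z 0 l) \o row k).
  by apply/funext => Y; rewrite dEbarE [LHS]mxE [in LHS]mxE.
have row_aff h : row k (h *: X + Th) = h *: row k X + row k Th by rewrite linearP.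
have [f_der f_D] :
    derivable f Th X /\ 'D_X f Th = delta_inv2 k * ((row k X - extrap 0 0 X k) *m M) 0 l.
  apply: (derive_quot_affine (b := 0)) => h h_neq0.
  rewrite /f row_aff extrap_affine.
  have -> : h *: row k X + row k Th - (h *: extrap 0 0 X k + extrap th0 thm1 Th k) =
      h *: (row k X - extrap 0 0 X k) + (row k Th - extrap th0 thm1 Th k).
    by apply/rowP => j; rewrite !mxE; ring.
  rewrite mulmxDl -scalemxAl; move: (_ *m M) (_ *m M) => V W.
  by rewrite !mxE /GRing.scale /= -mulrBr addrK mulrCA mulKf // mulr0 addr0.
have [comp_der comp_D] := derive_comp_affine (fun z => gradP a z 0 l) row_aff.
have [jac_der jac_D] := derive_entry_jacobian (row k X) l (gradP_diff a (row k Th)).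
have gradP_der := comp_der.2 jac_der.
split; first exact: derivableD f_der gradP_der.
by rewrite deriveD // f_D comp_D jac_D /dG [RHS]mxE [in RHS]mxE.
Qed.

Lemma derive_dEbar_setrow u k Th t e l :
  derivable (fun s => dEbar u k (setrow Th k s) 0 l) t e /\
  'D_e (fun s => dEbar u k (setrow Th k s) 0 l) t =
  (e *m (delta_inv2 k *: M + 'J (gradP (u (iota k))) t)) 0 l.
Proof.
have [comp_der comp_D] := derive_comp_affine (fun Y => dEbar u k Y 0 l)
  (A := setrow Th k) (fun h => setrow_affine Th k h e t).
have [der D] := derive_dEbar u k (setrow Th k t) (setrow 0 k e) l.
split; first exact: comp_der.2 der.
rewrite comp_D D /dG !row_setrow extrap_setrow extrap0 subr0 mulmxDr -scalemxAr.
(* The sides differ only in inferred normed-module instances, which [done] unfolds slowly. *)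
by congr (fun A => A 0 l).
Qed.

Lemma dG_affine u Th A B h k :
  dG u Th (h *: A + B) k = h *: dG u Th A k + dG u Th B k.
Proof.
have mulmxP (Z : 'M[R]_n) (a b : 'rV[R]_n) : (h *: a + b) *m Z = h *: (a *m Z) + b *m Z.
  by rewrite mulmxDl scalemxAl.
rewrite /dG; have -> : row k (h *: A + B) - extrap 0 0 (h *: A + B) k =
    h *: (row k A - extrap 0 0 A k) + (row k B - extrap 0 0 B k).
  by rewrite linearP extrap_affine /=; apply/rowP => j; rewrite !mxE; ring.
rewrite [row k (h *: A + B)]linearP !mulmxP !scalerDr scalerA [delta_inv2 k * h]mulrC.
by rewrite -scalerA addrACA.
Qed.

Definition dGvec (u : 'I_N -> U) (v e : 'rV[R]_(N * n)) : 'rV[R]_(N * n) :=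
  mxvec (\matrix_k dG u (vec_mx v) (vec_mx e) k).

Lemma dGvec_linear u v : linear (dGvec u v).
Proof.
move=> h x y; rewrite /dGvec -linearP; congr mxvec; apply/row_matrixP => k.
by rewrite rowK [vec_mx (_ + _)]linearP /= dG_affine [in RHS]linearP /= !rowK.
Qed.

Lemma derive_Gvec u v a e :
  derivable (fun y => Gvec u y 0 a) v e /\
  'D_e (fun y => Gvec u y 0 a) v = (e *m lin1_mx (dGvec u v)) 0 a.
Proof.
rewrite mul_rV_lin1_of; last exact: dGvec_linear.
case/mxvec_indexP: a => k j.
have -> : (fun y => Gvec u y 0 (mxvec_index k j)) = (fun y => dEbar u k (vec_mx y) 0 j).
  by apply/funext => y; rewrite /Defs.Gvec mxvecE mxE.
have vec_aff h : vec_mx (h *: e + v) = h *: vec_mx e + vec_mx v by rewrite linearP.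
have [comp_der comp_D] :=
  derive_comp_affine (fun Y => dEbar u k Y 0 j) (A := vec_mx) vec_aff.
have [der D] := derive_dEbar u k (vec_mx v) (vec_mx e) j.
split; first exact: comp_der.2 der.
by apply: (etrans comp_D); rewrite D /dGvec mxvecE [RHS]mxE.
Qed.

Lemma Lambda_half_sqn u :
  Lambda M del th0 thm1 P u iota = (fun v => 1/2 * sqn (Gvec u v)).
Proof.
apply/funext => v; rewrite /Lambda /Defs.Gvec sqn_mxvec mulr_sumr.
by apply: eq_bigr => k _; rewrite rowK.
Qed.

Variables (L lam : R).
Hypothesis L_gt0 : 0 < L.
Hypothesis gradP_lip : forall a x x', sqn (gradP a x - gradP a x') <= L ^+ 2 * sqn (x - x').
Hypothesis M_ge : forall x, lam * sqn x <= dot (x *m M) x.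
Hypothesis coer_gt0 : forall k : 'I_N, 0 < delta_inv2 k * lam - L.

Lemma diag_block_coercive a k t z :
  (delta_inv2 k * lam - L) * sqn z <= dot (z *m (delta_inv2 k *: M + 'J (gradP a) t)) z.
Proof.
apply: quad_form_perturb_ge => //; first exact: delta_inv2_ge0.
by move=> x; apply: sqn_mul_jacobian_le.
Qed.

Lemma Lambda_i_PL u (k : 'I_N) Th :
  PL (fun t => Lambda_i M del th0 thm1 P u iota k (setrow Th k t)).
Proof.
pose D t := delta_inv2 k *: M + 'J (gradP (u (iota k))) t.
apply: (PL_half_sqn_of_derive (D := D) (exprn_gt0 2 (coer_gt0 k))).
- by move=> t l e; case: (derive_dEbar_setrow u k Th t e l).
- by move=> t l e; case: (derive_dEbar_setrow u k Th t e l).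
- move=> t y; exact: (sqn_mul_ge_of_coercive (coer_gt0 k) (diag_block_coercive _ _ _) y).2.
Qed.

Definition extrap_const k := 2 * (1 + step_ratio k) ^+ 2 + 2 * step_ratio k ^+ 2.
Definition block_const k := 2 * delta_inv2 k ^+ 2 * norm1_mx (M *m M^T) * extrap_const k.

Lemma block_const_ge0 k : 0 <= block_const k.
Proof.
have ext_ge0 : 0 <= extrap_const k by rewrite addr_ge0 // mulr_ge0 // sqr_ge0.
by rewrite mulr_ge0 // mulr_ge0 ?norm1_mx_ge0 // mulr_ge0 // sqr_ge0.
Qed.

Definition sqn_rows (X : 'M[R]_(N, n)) k := \sum_(i < k) sqn (thext 0 0 X i.+2).

Lemma sqn_thext_le X k m : (m <= k.+1)%N -> sqn (thext 0 0 X m) <= sqn_rows X k.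
Proof.
have S_ge0 : 0 <= sqn_rows X k by apply: sumr_ge0 => i _; exact: sqn_ge0.
case: m => [|[|m]] m_le; rewrite ?sqn0 //.
rewrite /sqn_rows (bigD1 (@Ordinal k m m_le)) //= lerDl.
by apply: sumr_ge0 => i _; exact: sqn_ge0.
Qed.

Lemma sqn_extrap_le X k : sqn (extrap 0 0 X k) <= extrap_const k * sqn_rows X k.
Proof.
apply: le_trans (sqnD_le _ _) _; rewrite sqnN !sqnZ.
have := ler_wpM2l (sqr_ge0 (1 + step_ratio k)) (sqn_thext_le X (leqnn k.+1)).
have := ler_wpM2l (sqr_ge0 (step_ratio k)) (sqn_thext_le X (leqnSn k)).
rewrite /extrap_const; lra.
Qed.

Lemma sqn_row_le X u Th (k : 'I_N) :
  (delta_inv2 k * lam - L) ^+ 2 * sqn (row k X) <=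
  2 * sqn (dG u Th X k) + block_const k * sqn_rows X k.
Proof.
set D := delta_inv2 k *: M + 'J (gradP (u (iota k))) (row k Th).
have rowD : row k X *m D = dG u Th X k + delta_inv2 k *: (extrap 0 0 X k *m M).
  by rewrite /dG /D mulmxDr -scalemxAr mulmxBl scalerBr addrAC subrK.
have D_ge := diag_block_coercive (u (iota k)) k (row k Th).
apply: le_trans (sqn_mul_ge_of_coercive (coer_gt0 k) D_ge _).1 _.
rewrite rowD; apply: le_trans (sqnD_le _ _) _; rewrite sqnZ lerD2l /block_const.
have exM_le : sqn (extrap 0 0 X k *m M) <=
    norm1_mx (M *m M^T) * (extrap_const k * sqn_rows X k).
  exact: le_trans (sqn_mulmx_le _ _) (ler_wpM2l (norm1_mx_ge0 _) (sqn_extrap_le X k)).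
have := ler_wpM2l (sqr_ge0 (delta_inv2 k)) exM_le; lra.
Qed.

Definition substitution_const :=
  forward_const (fun k => (delta_inv2 k * lam - L) ^+ 2) block_const N.
Definition Jmat_bound := (2 * substitution_const + 1)^-1.

Lemma Jmat_bound_gt0 : 0 < Jmat_bound.
Proof.
have : 0 <= substitution_const.
  by apply: forward_const_ge0 => k; [exact: sqr_ge0 | exact: block_const_ge0].
by rewrite invr_gt0; lra.
Qed.

Lemma sqn_dGvec_ge u v e : Jmat_bound * sqn e <= sqn (dGvec u v e).
Proof.
set X := vec_mx e; set T := \matrix_k dG u (vec_mx v) X k.
have eE : sqn e = \sum_(i < N) sqn (thext 0 0 X i.+2).
  by rewrite -(vec_mxK e) sqn_mxvec; apply: eq_bigr => i _; rewrite thext_row.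
have dE : sqn (dGvec u v e) = \sum_(i < N) sqn (thext 0 0 T i.+2).
  by rewrite /dGvec sqn_mxvec; apply: eq_bigr => i _; rewrite thext_row.
have e_le : sqn e <= substitution_const * (2 * sqn (dGvec u v e)).
  rewrite eE dE mulr_sumr.
  apply: (@sum_le_forward_const R _ _ (fun i => sqn (thext 0 0 X i.+2))
    (fun i => 2 * sqn (thext 0 0 T i.+2))) => [k k_lt|k|k|k k_lt].
  - exact: exprn_gt0 (coer_gt0 (Ordinal k_lt)).
  - exact: block_const_ge0.
  - by rewrite mulr_ge0 ?sqn_ge0.
  - rewrite (thext_row 0 0 X (Ordinal k_lt)) (thext_row 0 0 T (Ordinal k_lt)) rowK.
    exact: (sqn_row_le X u (vec_mx v) (Ordinal k_lt)).
have := sqn_ge0 (dGvec u v e); have := Jmat_bound_gt0.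
rewrite /Jmat_bound invr_gt0 => J_gt0 dG_ge0.
rewrite ler_pdivrMl //; lra.
Qed.

Lemma Jmat_sigma_min_ge u v : (0 < N * n)%N ->
  Num.sqrt Jmat_bound <= sigma_min (Jmat M del th0 thm1 P u iota v).
Proof.
move=> Nn_gt0; rewrite /Jmat (jac_eq_trmx (fun a e => (derive_Gvec u v a e).2)).
apply: sigma_min_ge => // x; rewrite trmxK mul_rV_lin1_of; last exact: dGvec_linear.
exact: sqn_dGvec_ge.
Qed.

Lemma Lambda_PL u : PL (Lambda M del th0 thm1 P u iota).
Proof.
rewrite Lambda_half_sqn.
apply: (PL_half_sqn_of_derive (D := fun v => lin1_mx (dGvec u v)) Jmat_bound_gt0).
- by move=> v a e; case: (derive_Gvec u v a e).
- by move=> v a e; case: (derive_Gvec u v a e).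
- move=> v; apply: sqn_mul_tr_ge Jmat_bound_gt0 _ => x.
  rewrite mul_rV_lin1_of; last exact: dGvec_linear.
  exact: sqn_dGvec_ge.
Qed.

End Trajectory.

Lemma step_size_coercive (R : realType) (d s lam L : R) : 0 < L -> 0 < d ->
  d < Num.sqrt (s / L) -> s <= lam -> 0 < (d ^+ 2)^-1 * lam - L.
Proof.
move=> L_gt0 d_gt0 d_lt s_le.
have sL_gt0 : 0 < s / L by rewrite -sqrtr_gt0; exact: lt_trans d_lt.
have : d ^+ 2 < s / L by rewrite -ltr_sqrt // sqrtr_sqr gtr0_norm.
rewrite ltr_pdivlMr // => d2_lt.
by rewrite subr_gt0 mulrC ltr_pdivlMr ?exprn_gt0 //; lra.
Qed.

Theorem corollary1 (R : realType) (U : Type) (n N : nat) (M : 'M[R]_n)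
  (del : nat -> R) (th0 thm1 : 'rV[R]_n) (P : 'rV[R]_n -> U -> R)
  (u : 'I_N -> U) (iota : 'I_N -> 'I_N) (L : R) :
  (0 < n)%N -> sym_posdef M -> (1 <= N)%N ->
  (forall m, (m <= N)%N -> 0 < del m) ->
  0 < L ->
  (forall a : U, twice_diff_loclip_hess (fun x => P x a)) ->
  (forall a : U, curvature_bounded L (fun x => P x a)) ->
  (forall m, (1 <= m <= N)%N -> del m < Num.sqrt (sigma_min M / L)) ->
  (* (i) *)
  (forall (k : 'I_N) (Th : 'M[R]_(N, n)),
      PL (fun t => Lambda_i M del th0 thm1 P u iota k (setrow Th k t)))
  /\
  (* (ii) *)
  (exists2 c : R, 0 < c & forall (u' : 'I_N -> U) (v : 'rV[R]_(N * n)),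
      c <= sigma_min (Jmat M del th0 thm1 P u' iota v))
  /\
  (* (iii) *)
  PL (Lambda M del th0 thm1 P u iota).
Proof.
move=> n_gt0 M_spd N_gt0 del_gt0 L_gt0 P_reg P_curv del_lt.
have [lam sigma_le M_ge] := posdef_rayleigh_ge n_gt0 M_spd.
have P_diff a := (P_reg a).1.
have gradP_diff a := (P_reg a).2.1.
have gradP_lip a := lipschitz_sqn (P_curv a).2.
have coer_gt0 (k : 'I_N) : 0 < delta_inv2 del k * lam - L.
  apply: step_size_coercive sigma_le => //; first exact: del_gt0.
  by apply: del_lt; rewrite ltn_ord.
have MT := M_spd.1.
split; [|split].
- exact: (Lambda_i_PL th0 thm1 iota MT P_diff gradP_diff L_gt0 gradP_lip M_ge coer_gt0).
- exists (Num.sqrt (Jmat_bound N M del L lam)) => [|u' v].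
    by rewrite sqrtr_gt0 Jmat_bound_gt0.
  apply: (Jmat_sigma_min_ge th0 thm1 iota MT P_diff gradP_diff L_gt0 gradP_lip M_ge coer_gt0).
  by rewrite muln_gt0 N_gt0.
- exact: (Lambda_PL th0 thm1 iota MT P_diff gradP_diff L_gt0 gradP_lip M_ge coer_gt0).
Qed.
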